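(* Let $\mathcal{H}$ be a separable Hilbert space with inner product $\langle\cdot,\cdot\rangle$ (linear in the second argument), and let $\mathcal{F}_\varphi=\{\varphi_n\}_{n\ge0}$ be a (Schauder) basis of $\mathcal{H}$ with biorthogonal basis $\mathcal{F}_\psi=\{\psi_n\}_{n\ge0}$, $\langle\varphi_n,\psi_k\rangle=\delta_{n,k}$, with $\varphi_n,\psi_n\in\mathcal{D}$ for a dense subspace $\mathcal{D}$. Let $H$ be an operator with $D(H),D(H^\dagger)\supseteq\mathcal{D}$, let $\{\Phi_n\}_{n\ge0}$ satisfy $H\Phi_n=E_n\Phi_n$ and $\{\eta_n\}_{n\ge0}$ satisfy $H^\dagger\eta_n=\overline{E_n}\eta_n$, and put $c_k^{(n)}=\langle\psi_k,\Phi_n\rangle$ (so $\Phi_n=\sum_k c_k^{(n)}\varphi_k$) and $d_k^{(n)}=\langle\varphi_k,\eta_n\rangle$ (so $\eta_n=\sum_k d_k^{(n)}\psi_k$). Then (i) $\sum_k\overline{c_k^{(n)}}\,d_k^{(m)}=\langle\Phi_n,\eta_m\rangle$ for all $n,m$, and this equals $\delta_{n,m}$ if each eigenvalue of $H$ has multiplicity one (the $E_n$ are pairwise distinct) and the normalizations are chosen so that $\langle\Phi_n,\eta_n\rangle=1$ for all $n$; (ii) if $\{\Phi_n\}$ and $\{\eta_n\}$ are $\mathcal{D}$-quasi bases, then $\sum_n\overline{c_k^{(n)}}\,d_l^{(n)}=\delta_{k,l}$ for all $k,l\ge0$.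
   Context: Two families $\{f_n\}$, $\{g_n\}$ are called $\mathcal{D}$-quasi bases if for all $f,g\in\mathcal{D}$: $\langle f,g\rangle=\sum_{n\ge0}\langle f,f_n\rangle\langle g_n,g\rangle=\sum_{n\ge0}\langle f,g_n\rangle\langle f_n,g\rangle$. *)

From mathcomp Require Import all_boot all_order all_algebra.
From mathcomp Require Import all_classical all_reals all_analysis.
From mathcomp Require Export complex.
Set Implicit Arguments. Unset Strict Implicit. Unset Printing Implicit Defensive.
Import Order.TTheory GRing.Theory Num.Theory.
Import numFieldTopology.Exports numFieldNormedType.Exports.
Local Open Scope classical_set_scope.
Local Open Scope ring_scope.

Section Hilbert.
Variables (R : realType) (V : lmodType R[i]) (ip : V -> V -> R[i]).

Definition is_inner_product : Prop :=
  [/\ forall f g h, ip f (g + h) = ip f g + ip f h,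
      forall (a : R[i]) f g, ip f (a *: g) = a * ip f g,
      forall f g, ip g f = (ip f g)^*,
      forall f, 0 <= ip f f
    & forall f, ip f f = 0 -> f = 0].

Definition hnorm (f : V) : R := Num.sqrt (complex.Re (ip f f)).

Definition vcvg_to (s : nat -> V) (f : V) : Prop :=
  (fun N => hnorm (s N - f)) @ \oo --> (0 : R).

Definition vseries_to (u : nat -> V) (f : V) : Prop :=
  vcvg_to (fun N => \sum_(k < N) u k) f.

Definition hcauchy (s : nat -> V) : Prop :=
  forall e : R, 0 < e -> exists N, forall m n, (N <= m)%N -> (N <= n)%N ->
    hnorm (s m - s n) < e.

Definition hcomplete : Prop :=
  forall s : nat -> V, hcauchy s -> exists f, vcvg_to s f.

Definition hseparable : Prop :=
  exists d : nat -> V, forall f (e : R), 0 < e -> exists n, hnorm (f - d n) < e.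

Definition is_separable_hilbert : Prop :=
  [/\ is_inner_product, hcomplete & hseparable].

Definition is_subspace (D : set V) : Prop :=
  [/\ D 0, forall f g, D f -> D g -> D (f + g)
    & forall (a : R[i]) f, D f -> D (a *: f)].

Definition is_dense (D : set V) : Prop :=
  forall f (e : R), 0 < e -> exists g, D g /\ hnorm (f - g) < e.

Definition schauder_basis (phi : nat -> V) : Prop :=
  forall f, exists! a : nat -> R[i], vseries_to (fun k => a k *: phi k) f.

Definition linear_operator (DH : set V) (H : V -> V) : Prop :=
  is_subspace DH /\
  (forall f g, DH f -> DH g -> H (f + g) = H f + H g) /\
  (forall (a : R[i]) f, DH f -> H (a *: f) = a *: H f).

(* g belongs to D(H^dagger) and H^dagger g = h  (H densely defined):
   <H f, g> = <f, h> for all f in D(H) *)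
Definition adjoint_rel (DH : set V) (H : V -> V) (g h : V) : Prop :=
  forall f, DH f -> ip (H f) g = ip f h.

End Hilbert.

Definition cseries_to (R : realType) (u : nat -> R[i]) (z : R[i]) : Prop :=
  (fun N : nat => (\sum_(k < N) u k : R[i]^o)) @ \oo --> (z : R[i]^o).

Definition quasi_bases (R : realType) (V : lmodType R[i]) (ip : V -> V -> R[i])
  (D : set V) (fn gn : nat -> V) : Prop :=
  forall f g, D f -> D g ->
    cseries_to (fun n => ip f (fn n) * ip (gn n) g) (ip f g) /\
    cseries_to (fun n => ip f (gn n) * ip (fn n) g) (ip f g).

(* By Cauchy-Schwarz the inner product is continuous in each argument, so
   pairing the expansion [Phi_n = sum_k <psi_k, Phi_n> phi_k] with [eta_m]
   termwise gives [sum_k conj(c_k^(n)) d_k^(m) = <Phi_n, eta_m>].  Moving [H]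
   across the inner product gives
   [conj(E_n) <Phi_n, eta_m> = <H Phi_n, eta_m> = conj(E_m) <Phi_n, eta_m>],
   so eigenvectors for distinct eigenvalues are orthogonal.  Part (ii) is the
   second quasi-basis identity for the pair [phi_l, psi_k], whose inner
   product is [delta_{k,l}]. *)

From mathcomp Require Import all_boot all_order all_algebra.
From mathcomp Require Import all_classical all_reals all_analysis.
From mathcomp Require Import complex.
From mathcomp Require Import ring.
Import Order.TTheory GRing.Theory Num.Theory.
Local Open Scope classical_set_scope.
Local Open Scope ring_scope.

Section InnerProduct.
Set Implicit Arguments.
Variables (R : realType) (V : lmodType R[i]) (ip : V -> V -> R[i]).
Hypothesis ipP : is_inner_product ip.

Lemma ipDr f g h : ip f (g + h) = ip f g + ip f h.
Proof. by case: ipP. Qed.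

Lemma ipZr a f g : ip f (a *: g) = a * ip f g.
Proof. by case: ipP. Qed.

Lemma ipC f g : ip g f = (ip f g)^*.
Proof. by case: ipP. Qed.

Lemma ip_ge0 f : 0 <= ip f f.
Proof. by case: ipP. Qed.

Lemma ip_eq0 f : (ip f f == 0) = (f == 0).
Proof.
apply/eqP/eqP => [|->]; first by case: ipP => _ _ _ _; apply.
by rewrite -(scale0r 0) ipZr mul0r.
Qed.

Lemma ip0r f : ip f 0 = 0.
Proof. by rewrite -(scale0r 0) ipZr mul0r. Qed.

Lemma ipBr f g h : ip f (g - h) = ip f g - ip f h.
Proof. by rewrite ipDr -scaleN1r ipZr mulN1r. Qed.

Lemma ipZl a f g : ip (a *: f) g = a^* * ip f g.
Proof. by rewrite ipC ipZr rmorphM /= -ipC. Qed.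

Lemma ipBl f g h : ip (f - g) h = ip f h - ip g h.
Proof. by rewrite ipC ipBr rmorphB /= -!ipC. Qed.

Lemma ip_sumr f I (r : seq I) (P : pred I) (F : I -> V) :
  ip f (\sum_(i <- r | P i) F i) = \sum_(i <- r | P i) ip f (F i).
Proof. exact: (big_morph (ip f) (ipDr f) (ip0r f)). Qed.

Lemma ip_suml g I (r : seq I) (P : pred I) (F : I -> V) :
  ip (\sum_(i <- r | P i) F i) g = \sum_(i <- r | P i) ip (F i) g.
Proof.
by rewrite ipC ip_sumr rmorph_sum; apply: eq_bigr => i _; rewrite [RHS]ipC.
Qed.

(* Expand [0 <= <f - a g, f - a g>] at the minimising [a = <g, f> / <g, g>]. *)
Lemma cauchy_schwarz f g : `|ip f g| ^+ 2 <= ip f f * ip g g.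
Proof.
have [->|g0] := eqVneq g 0; first by rewrite !ip0r normr0 mulr0 expr2 mulr0.
set G := ip g g; set c := ip g f.
have G_gt0 : 0 < G by rewrite lt_def ip_eq0 g0 ip_ge0.
have G_real : G^* = G by rewrite /G -ipC.
have := ip_ge0 (f - (c / G) *: g).
rewrite ipBl !ipBr !ipZl !ipZr -/G [ip f g]ipC -/c => ge0.
have expand :
    G * (ip f f - c / G * c^* - ((c / G)^* * c - (c / G)^* * (c / G * G)))
    = ip f f * G - c^* * c.
  by rewrite rmorphM fmorphV /= G_real; field; rewrite gt_eqF.
rewrite normCK conjCK -subr_ge0 -expand.
exact: mulr_ge0 (ltW G_gt0) ge0.
Qed.

Lemma hnorm_ge0 f : 0 <= hnorm ip f.
Proof. exact: sqrtr_ge0. Qed.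

Lemma sqr_hnorm f : (hnorm ip f)%:C%C ^+ 2 = ip f f.
Proof.
have ipff := RRe_real (ger0_real (ip_ge0 f)).
have Re_ge0 : 0 <= complex.Re (ip f f) by rewrite -lecR ipff ip_ge0.
by rewrite -rmorphXn /= sqr_sqrtr.
Qed.

Lemma norm_ip_le f g : `|ip f g| <= (hnorm ip f * hnorm ip g)%:C%C.
Proof.
rewrite -(ler_pXn2r (n := 2)) ?nnegrE ?normr_ge0 ?lecR ?mulr_ge0 ?hnorm_ge0 //.
by rewrite rmorphM exprMn /= !sqr_hnorm cauchy_schwarz.
Qed.

Lemma ip_cvgr g s f : vcvg_to ip s f ->
  (fun N => ip g (s N) : R[i]^o) @ \oo --> (ip g f : R[i]^o).
Proof.
move=> /cvgrPdist_lt s_f; apply/cvgrPdist_lt => eps eps_gt0.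
have eps_real := RRe_real (gtr0_real eps_gt0).
set r := complex.Re eps in eps_real.
have r_gt0 : 0 < r by rewrite -ltcR eps_real.
have ng1_gt0 : 0 < hnorm ip g + 1 by rewrite ltr_wpDl ?hnorm_ge0.
apply: filterS (s_f (r / (hnorm ip g + 1)) _) => [N|]; last exact: divr_gt0.
rewrite sub0r normrN ger0_norm ?hnorm_ge0 // ltr_pdivlMr // => near_f.
rewrite distrC -ipBr; apply: le_lt_trans (norm_ip_le _ _) _.
rewrite -eps_real ltcR; apply: le_lt_trans near_f.
by rewrite mulrDr mulr1 mulrC lerDl hnorm_ge0.
Qed.

Lemma ip_cvgl g s f : vcvg_to ip s f ->
  (fun N => ip (s N) g : R[i]^o) @ \oo --> (ip f g : R[i]^o).
Proof.
move=> /(ip_cvgr (g := g)) /cvgrPdist_lt s_f; apply/cvgrPdist_lt => eps /s_f.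
by apply: filterS => N; rewrite [ip f g]ipC [ip (s N) g]ipC -rmorphB norm_conjC.
Qed.

Section Biorthogonal.
Variables phi psi : nat -> V.
Hypothesis phi_psi : forall n k, ip (phi n) (psi k) = (n == k)%:R.

Lemma ip_psi_phi j k : ip (psi j) (phi k) = (k == j)%:R.
Proof. by rewrite ipC phi_psi conjC_nat. Qed.

Lemma ip_psi_partial_sum (a : nat -> R[i]) j N : (j < N)%N ->
  ip (psi j) (\sum_(k < N) a k *: phi k) = a j.
Proof.
move=> jN; rewrite ip_sumr (bigD1 (Ordinal jN)) //= big1 => [|k kj].
  by rewrite ipZr ip_psi_phi eqxx mulr1 addr0.
have /negbTE kjN : k != j :> nat := kj.
by rewrite ipZr ip_psi_phi kjN mulr0.
Qed.

Lemma expansion_coefE f (a : nat -> R[i]) j :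
  vseries_to ip (fun k => a k *: phi k) f -> ip (psi j) f = a j.
Proof.
move=> /(ip_cvgr (g := psi j)) to_ip.
have to_a : (fun N => ip (psi j) (\sum_(k < N) a k *: phi k) : R[i]^o)
    @ \oo --> (a j : R[i]^o).
  apply: cvg_near_cst; apply: filterS (nbhs_infty_gt j) => N.
  exact: ip_psi_partial_sum.
exact: cvg_unique to_ip to_a.
Qed.

Lemma biorth_ip_series f g : schauder_basis ip phi ->
  cseries_to (fun k => (ip (psi k) f)^* * ip (phi k) g) (ip f g).
Proof.
move=> /(_ f) [a [f_exp _]].
have partial_sums N : \sum_(k < N) (ip (psi k) f)^* * ip (phi k) g
                    = ip (\sum_(k < N) a k *: phi k) g.
  rewrite ip_suml; apply: eq_bigr => k _.
  by rewrite ipZl (expansion_coefE a k f_exp).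
by rewrite /cseries_to (funext partial_sums); apply: ip_cvgl.
Qed.

End Biorthogonal.

Lemma eigen_adjoint_orthogonal (DH : set V) (H : V -> V) f g (a b : R[i]) :
  DH f -> H f = a *: f -> adjoint_rel ip DH H g (b^* *: g) -> a != b ->
  ip f g = 0.
Proof.
move=> DHf Hf adj_g ab.
have : (a^* - b^*) * ip f g = 0 by rewrite mulrBl -ipZl -Hf adj_g // ipZr subrr.
move/eqP; rewrite mulf_eq0 subr_eq0 => /orP[|/eqP //].
by move=> /eqP/(can_inj conjCK) eq_ab; rewrite eq_ab eqxx in ab.
Qed.

Lemma quasi_bases_coef_series (D : set V) (fn gn : nat -> V) f g :
  quasi_bases ip D fn gn -> D f -> D g ->
  cseries_to (fun n => (ip g (fn n))^* * ip f (gn n)) (ip f g).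
Proof.
move=> qb Df Dg; have [_ fg] := qb f g Df Dg.
by under eq_fun => n do rewrite mulrC -ipC.
Qed.

End InnerProduct.

Theorem proposition4 (R : realType) (V : lmodType R[i]) (ip : V -> V -> R[i])
  (D : set V) (phi psi : nat -> V) (DH : set V) (H : V -> V)
  (E : nat -> R[i]) (Phi eta : nat -> V) :
  is_separable_hilbert ip ->
  is_subspace D -> is_dense ip D ->
  schauder_basis ip phi -> schauder_basis ip psi ->
  (forall n k, ip (phi n) (psi k) = (n == k)%:R) ->
  (forall n, D (phi n) /\ D (psi n)) ->
  linear_operator DH H ->
  D `<=` DH ->
  (forall g, D g -> exists h, adjoint_rel ip DH H g h) ->
  (forall n, Phi n != 0 /\ DH (Phi n) /\ H (Phi n) = E n *: Phi n) ->
  (forall n, eta n != 0 /\ adjoint_rel ip DH H (eta n) ((E n)^* *: eta n)) ->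
  (* (i) *)
  (forall n m,
     cseries_to (fun k => (ip (psi k) (Phi n))^* * ip (phi k) (eta m))
                (ip (Phi n) (eta m))) /\
  ((forall n m, n <> m -> E n <> E m) ->
   (forall n, ip (Phi n) (eta n) = 1) ->
   forall n m, ip (Phi n) (eta m) = (n == m)%:R) /\
  (* (ii) *)
  (quasi_bases ip D Phi eta ->
   forall k l,
     cseries_to (fun n => (ip (psi k) (Phi n))^* * ip (phi l) (eta n))
                (k == l)%:R).
Proof.
move=> [ipP _ _] _ _ phi_basis _ phi_psi Dphi_psi _ _ _ Phi_eigen eta_eigen.
split; [|split].
- by move=> n m; apply: biorth_ip_series.
- move=> E_inj Phi_eta_norm n m.
  have [<-|nm] := eqVneq n m; first exact: Phi_eta_norm.
  have [_ [DPhi HPhi]] := Phi_eigen n.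
  rewrite mulr0n.
  apply: (eigen_adjoint_orthogonal ipP (Phi n) (E n) (E m) DPhi HPhi).
    exact: (eta_eigen m).2.
  by apply/eqP; apply: E_inj; apply/eqP.
- move=> qb k l.
  rewrite eq_sym -phi_psi.
  exact: quasi_bases_coef_series qb (Dphi_psi l).1 (Dphi_psi k).2.
Qed.
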